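(* Let $\mathbb{M}$ be $(1+3)$-dimensional Minkowski spacetime and $\overline{\mathcal{P}}_+^\uparrow=\mathbb{R}^4\rtimes SL(2,\mathbb{C})$ the double cover of the proper orthochronous Poincaré group, with elements $(a,A)$, and let $\Lambda:SL(2,\mathbb{C})\to SO^+(1,3)$ be the covering homomorphism. Let $\mathcal{H}$ be a Hilbert space, $\mathcal{D}\subset\mathcal{H}$ dense, $U$ a unitary representation of $\overline{\mathcal{P}}_+^\uparrow$ on $\mathcal{H}$, and $S:SL(2,\mathbb{C})\to GL(\mathbb{C}^n)$ a multiplicity-free finite-dimensional representation with no trivial sub-representations. Let $\hat\psi=\{\hat\psi_\alpha:\mathbb{M}\to\mathcal{L}(\mathcal{D},\mathcal{H})\}_{\alpha=1}^n$. Suppose (1) $U(a,A)\mathcal{D}\subset\mathcal{D}$ and $U(a,A)^\dagger\mathcal{D}\subset\mathcal{D}$ for all $(a,A)\in\overline{\mathcal{P}}_+^\uparrow$; (2) $\hat\psi_\alpha(x)\mathcal{D}\subset\mathcal{D}$ and $\hat\psi_\alpha(x)^\dagger\mathcal{D}\subset\mathcal{D}$ for all $x\in\mathbb{M}$ and all $\alpha$; (3) for all $(a,A)\in\overline{\mathcal{P}}_+^\uparrow$, $x\in\mathbb{M}$, $\alpha\in\{1,\dots,n\}$, on $\mathcal{D}$: $U(a,A)\hat\psi_\alpha(x)U(a,A)^\dagger=\sum_{\beta=1}^nS[A^{-1}]_{\alpha\beta}\hat\psi_\beta(\Lambda(A)x+a)$; (4) there exists a nonzero vector $\ket\Omega\in\mathcal{D}$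 with $U(a,A)\ket\Omega=\ket\Omega$ for all $(a,A)\in\overline{\mathcal{P}}_+^\uparrow$. Then $\hat\psi_\alpha(x)\ket\Omega=\hat\psi_\alpha(x)^\dagger\ket\Omega=0$ for all $x\in\mathbb{M}$ and all $\alpha\in\{1,\dots,n\}$.
   Context: $\mathcal{L}(\mathcal{D},\mathcal{H})$ denotes the linear maps from $\mathcal{D}$ into $\mathcal{H}$. No continuity of $U$ is assumed. A finite-dimensional representation is multiplicity-free if, in its decomposition into irreducible sub-representations, no irreducible representation occurs more than once; ''no trivial sub-representations'' means the one-dimensional trivial representation does not occur. *)

From HB Require Import structures.
From mathcomp Require Import all_boot all_order all_algebra.
From mathcomp Require Import reals.
From mathcomp Require Import complex.
Set Implicit Arguments. Unset Strict Implicit. Unset Printing Implicit Defensive.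
Import Order.TTheory GRing.Theory Num.Theory.
Local Open Scope ring_scope.
Local Open Scope complex_scope.

Section Defs.
Variable R : realType.
Local Notation C := (R[i]).

(* Physics convention: ip u v = <u|v>, antilinear in u, linear in v. *)
Section Hilbert.
Variable V : lmodType C.
Variable ip : V -> V -> C.

Definition dist2 (u v : V) : R := complex.Re (ip (u - v) (u - v)).

Definition is_cauchy (u : nat -> V) : Prop :=
  forall eps : R, 0 < eps -> exists N : nat,
    forall m k : nat, (N <= m)%N -> (N <= k)%N -> dist2 (u m) (u k) < eps.

Definition converges_to (u : nat -> V) (l : V) : Prop :=
  forall eps : R, 0 < eps -> exists N : nat,
    forall m : nat, (N <= m)%N -> dist2 (u m) l < eps.

Definition hilbert_ip : Prop :=
  [/\ (forall u v w : V, forall c : C, ip u (c *: v + w) = c * ip u v + ip u w),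
      (forall u v : V, ip v u = conjc (ip u v)),
      (forall u : V, 0 <= ip u u),
      (forall u : V, ip u u = 0 -> u = 0)
    & (forall u : nat -> V, is_cauchy u -> exists l, converges_to u l)].

Definition is_subspace (D : V -> Prop) : Prop :=
  D 0 /\ forall (c : C) (u v : V), D u -> D v -> D (c *: u + v).

Definition is_dense (D : V -> Prop) : Prop :=
  forall (v : V) (eps : R), 0 < eps -> exists d, D d /\ dist2 v d < eps.

(* T : V -> V, regarded as an element of L(Dom, V) *)
Definition linear_on (Dom : V -> Prop) (T : V -> V) : Prop :=
  forall (c : C) (u v : V), Dom u -> Dom v -> T (c *: u + v) = c *: T u + T v.

(* u = T^dagger w, where T has domain Dom:  <u|v> = <w|T v> for all v in Dom *)
Definition adjoint_at (Dom : V -> Prop) (T : V -> V) (w u : V) : Prop :=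
  forall v : V, Dom v -> ip u v = ip w (T v).

(* D is contained in the domain of T^dagger and T^dagger D is contained in D *)
Definition adjoint_preserves (Dom : V -> Prop) (T : V -> V) (D : V -> Prop) : Prop :=
  forall w : V, D w -> exists u : V, D u /\ adjoint_at Dom T w u.

Definition unitary_op (T : V -> V) : Prop :=
  [/\ (forall (c : C) (u v : V), T (c *: u + v) = c *: T u + T v),
      (forall u v : V, ip (T u) (T v) = ip u v)
    & (forall w : V, exists u, T u = w)].
End Hilbert.

(* points of Minkowski space: x = (x^0, x^1, x^2, x^3) as a row vector *)
Definition mink := 'rV[R]_4.

Definition SL2 (A : 'M[C]_2) : Prop := \det A = 1.

(* x |-> x^mu sigma_mu *)
Definition herm_of (x : mink) : 'M[C]_2 :=
  \matrix_(i < 2, j < 2)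
    (if (val i == 0)%N && (val j == 0)%N then (x 0 0 + x 0 3)%:C
     else if (val i == 0)%N then (x 0 1) -i* (x 0 2)
     else if (val j == 0)%N then (x 0 1) +i* (x 0 2)
     else (x 0 0 - x 0 3)%:C).

(* inverse of herm_of on Hermitian matrices *)
Definition vec_of_herm (M : 'M[C]_2) : mink :=
  \row_(k < 4)
    (if (val k == 0)%N then complex.Re (M 0 0 + M 1 1) / 2
     else if (val k == 1)%N then complex.Re (M 1 0)
     else if (val k == 2)%N then complex.Im (M 1 0)
     else complex.Re (M 0 0 - M 1 1) / 2).

Definition conjT (A : 'M[C]_2) : 'M[C]_2 := (map_mx (@conjc R) A)^T.

(* Lambda(A) x, defined by  Lambda(A)x . sigma = A (x . sigma) A^*  *)
Definition Lam (A : 'M[C]_2) (x : mink) : mink :=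
  vec_of_herm (A *m herm_of x *m conjT A).

(* Subspaces of C^n are row spaces of n x n matrices (mxalgebra); a column
   vector v is acted on by S A as S A *m v, i.e. a row vector v^T by (S A)^T. *)
Section Rep.
Variable n : nat.
Variable S : 'M[C]_2 -> 'M[C]_n.

Definition is_rep : Prop :=
  [/\ (forall A, SL2 A -> S A \in unitmx),
      S 1%:M = 1%:M
    & (forall A B, SL2 A -> SL2 B -> S (A *m B) = S A *m S B)].

Definition invariant (W : 'M[C]_n) : Prop :=
  forall A, SL2 A -> (W *m (S A)^T <= W)%MS.

Definition irreducible_sub (W : 'M[C]_n) : Prop :=
  [/\ invariant W, W != 0
    & forall W' : 'M[C]_n, invariant W' -> (W' <= W)%MS ->
        W' == 0 \/ (W' == W)%MS].

(* the sub-representations on W1 and W2 are isomorphic *)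
Definition iso_sub (W1 W2 : 'M[C]_n) : Prop :=
  exists f : 'M[C]_n,
    [/\ (W1 *m f == W2)%MS, \rank (W1 *m f) = \rank W1
      & forall A, SL2 A -> W1 *m (S A)^T *m f = W1 *m f *m (S A)^T].

Definition trivial_sub (W : 'M[C]_n) : Prop :=
  \rank W = 1%N /\ forall A, SL2 A -> W *m (S A)^T = W.

(* S is multiplicity-free with no trivial sub-representation: C^n decomposes
   as a direct sum of irreducible sub-representations, pairwise
   non-isomorphic, none of them trivial *)
Definition multfree_notrivial : Prop :=
  exists (k : nat) (W : 'I_k -> 'M[C]_n),
    [/\ mxdirect (\sum_(i < k) W i),
        (\sum_(i < k) W i == 1%:M)%MS,
        (forall i, irreducible_sub (W i)),
        (forall i j, i != j -> ~ iso_sub (W i) (W j))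
      & (forall i, ~ trivial_sub (W i))].
End Rep.
End Defs.

(* The vectors psi_alpha(0) Omega transform under U(0, A) by the matrices
   S(A^-1), so their Gram matrix G is Hermitian, positive semidefinite and
   S-invariant: S(A) G S(A)^* = G.  Along the unipotent one-parameter subgroups
   t |-> [[1, t], [0, 1]] and t |-> [[1, 0], [t, 1]] of SL(2, C), S(u(t)) is
   conjugate to S(u(m t)) = S(u(t))^m, which forces S(u(t)) to be unipotent,
   and a unipotent matrix preserving a positive semidefinite form fixes it:
   S(u(t)) G = G.  These subgroups generate SL(2, C), so the columns of G are
   fixed vectors of S, and a sum of non-trivial irreducible representations has
   none.  Hence G = 0, i.e.
   psi_alpha(0) Omega = 0.  The vectors psi_alpha(0)^dagger Omega transform with
   the complex-conjugate matrices, and the same argument kills them; translation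
   covariance carries both facts from 0 to every x. *)

From Pilot Require Import Defs.
From HB Require Import structures.
From mathcomp Require Import all_boot all_order all_algebra.
From mathcomp Require Import reals complex ring zify.
Set Implicit Arguments. Unset Strict Implicit. Unset Printing Implicit Defensive.
Import Order.TTheory GRing.Theory Num.Theory Num.Def.
Local Open Scope ring_scope.
Local Open Scope sesquilinear_scope.

Section PsdForm.
Variable C : numClosedFieldType.

Lemma trmxC_mul m p q (A : 'M[C]_(m, p)) (B : 'M_(p, q)) :
  (A *m B)^t* = B^t* *m A^t*.
Proof. by rewrite trmx_mul map_mxM. Qed.

Definition psdmx n (H : 'M[C]_n) := forall a : 'rV_n, 0 <= form conjC H a a.

Section Hermitian.
Variables (n : nat) (H : 'M[C]_n).
Hypotheses (H_herm : H^t* = H) (H_psd : psdmx H).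
Local Notation "''[' u , v ]" := (form conjC H u v).

Lemma form_hermC u v : '[v, u] = '[u, v]^*.
Proof.
have -> : '[u, v]^* = ((u *m H *m v^t*)^t*) 0 0 by rewrite /form !mxE.
by rewrite !trmxC_mul trmxCK H_herm mulmxA.
Qed.

Lemma form_e u j : '[u, 'e_j] = (u *m H) 0 j.
Proof. by rewrite /form trmx_delta map_delta_mx -colE !mxE. Qed.

(* Cauchy-Schwarz: expanding [0 <= '[x - e a y]] with [a = '[x, y]] and
   [e = (1 + '[y])^-1] gives [0 <= e |a|^2 (e '[y] - 2)], where [e '[y] < 1]. *)
Lemma psd_form_eq0 x : '[x, x] = 0 -> x *m H = 0.
Proof.
move=> xx; apply/rowP => j; rewrite -form_e mxE.
set a := '[x, 'e_j]; set b := '['e_j, 'e_j].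
have b_ge0 : 0 <= b by apply: H_psd.
set e := (1 + b)^-1.
have e_gt0 : 0 < e by rewrite invr_gt0 ltr_wpDr.
have eC : e^* = e by rewrite geC0_conj // ltW.
have eb_lt2 : e * b < 2.
  apply: (@le_lt_trans _ _ 1); last by rewrite ltr1n.
  by rewrite ler_pdivrMl ?ltr_wpDr // mulr1 lerDr.
have := H_psd (x - (e * a) *: 'e_j).
rewrite formDl !formDr !formNl !formNr !formZl !formZr xx -/a -/b form_hermC -/a.
rewrite rmorphM /= eC => le0.
have : 0 <= e * (a * a^*) * (e * b - 2).
  by move: le0; congr (_ <= _); ring.
rewrite nmulr_lge0 ?subr_lt0 // pmulr_rle0 // => aa_le0.
by apply/eqP; rewrite -mul_conjC_eq0 eq_le aa_le0 mul_conjC_ge0.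
Qed.

Lemma psd_mul_eq0 m (X : 'M_(m, n)) : X *m H *m X^t* = 0 -> X *m H = 0.
Proof.
move=> XHX; apply/row_matrixP => i; rewrite row_mul row0 psd_form_eq0 //.
rewrite /form rowE trmxC_mul !mulmxA -(mulmxA _ X) -(mulmxA _ (X *m H)) XHX.
by rewrite mulmx0 mul0mx mxE.
Qed.

(* With N = P - 1 the invariance reads N H + H N^* + N H N^* = 0; multiplying
   it by N^j on the left and by (N^(j+1))^* on the right shows, by descending
   induction on j, that every N^(j+1) H vanishes. *)
Lemma unipotent_fixed_form (P : 'M_n) k :
  P *m H *m P^t* = H -> (P - 1) ^+ k = 0 -> P *m H = H.
Proof.
set N := P - 1 => PHP Nk; have PN : P = 1 + N by rewrite addrC subrK.
clearbody N; subst P; move: PHP.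
rewrite linearD /= map_mxD trmx1 map_mx1 mulmxDl mul1mx !mulmxDr !mulmx1.
rewrite -addrA -[X in _ = X]addr0 mulmxDl => /addrI eqN.
have step j : N ^+ j.+2 *m H = 0 -> N ^+ j.+1 *m H = 0.
  move=> NH; apply: psd_mul_eq0.
  have HN : H *m (N ^+ j.+2)^t* = 0.
    by rewrite -[H in H *m _]H_herm -trmxC_mul NH trmx0 map_mx0.
  have := congr1 (fun Z => N ^+ j *m Z *m (N ^+ j.+1)^t*) eqN.
  have NX : N^t* *m (N ^+ j.+1)^t* = (N ^+ j.+2)^t*.
    by rewrite -trmxC_mul [in RHS]exprSr.
  rewrite mulmx0 mul0mx !mulmxDr !mulmxDl -!mulmxA NX HN !mulmx0 !addr0.
  by rewrite exprSr mulmxA.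
have descend j : N ^+ j.+1 *m H = 0 -> N *m H = 0.
  by elim: j => [|j IHj] // /step.
by rewrite (descend k) ?addr0 // exprSr Nk mul0r mul0mx.
Qed.
End Hermitian.

Lemma map_conj_herm n (H : 'M[C]_n) :
  H^t* = H -> (map_mx conjC H)^t* = map_mx conjC H.
Proof. by move=> H_herm; rewrite map_trmx H_herm. Qed.

Lemma psdmx_conj n (H : 'M[C]_n) : psdmx H -> psdmx (map_mx conjC H).
Proof.
move=> H_psd a; rewrite -conjC_ge0.
have -> : (form conjC (map_mx conjC H) a a)^* =
          form conjC H (map_mx conjC a) (map_mx conjC a).
  have conj_entry (X : 'M[C]_1) : (X 0 0)^* = map_mx conjC X 0 0 by rewrite mxE.
  by rewrite /form conj_entry !map_mxM map_mxCK map_trmx.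
exact: H_psd.
Qed.
End PsdForm.

Section Unipotent.
Variable C : numClosedFieldType.

Lemma eigenvalue_similar n (D A B : 'M[C]_n) mu :
  D \in unitmx -> D *m A = B *m D -> eigenvalue B mu -> eigenvalue A mu.
Proof.
move=> D_unit DAB /eigenvalueP [v vB v_neq0]; apply/eigenvalueP; exists (v *m D).
  by rewrite -mulmxA DAB mulmxA vB scalemxAl.
by apply: contraNneq v_neq0 => vD0; rewrite -(mulmxK D_unit v) vD0 mul0mx.
Qed.

Lemma eigenvalue_exp n (A : 'M[C]_n) mu m :
  eigenvalue A mu -> eigenvalue (A ^+ m) (mu ^+ m).
Proof.
move=> /eigenvalueP [v vA v_neq0]; apply/eigenvalueP; exists v => //.
elim: m => [|m IHm]; first by rewrite !expr0 scale1r mulmx1.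
by rewrite exprSr mulmxA IHm -scalemxAl vA scalerA -exprSr.
Qed.

Lemma root_powers_unity (p : {poly C}) mu : p != 0 -> mu != 0 ->
  (forall m, (0 < m)%N -> root p (mu ^+ m)) -> mu ^+ (size p).-1`! = 1.
Proof.
move=> p_neq0 mu_neq0 p_mu.
set s := [seq mu ^+ i.+1 | i <- iota 0 (size p)].
have : ~~ uniq s.
  apply/negP => s_uniq.
  suff /(max_poly_roots p_neq0)/(_ s_uniq) : all (root p) s.
    by rewrite size_map size_iota ltnn.
  by apply/allP => _ /mapP [i _ ->]; apply: p_mu.
case/(uniqPn 0) => i [j [lt_ij]]; rewrite size_map size_iota => lt_jp.
have lt_ip := ltn_trans lt_ij lt_jp.
rewrite !(nth_map 0%N) ?size_iota // !nth_iota // !add0n => eq_ij.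
have mu_ji : mu ^+ (j - i) = 1.
  apply: (mulfI (expf_neq0 i.+1 mu_neq0)); rewrite -exprD mulr1 eq_ij.
  by rewrite addSn subnKC // ltnW.
have : (j - i %| (size p).-1`!)%N.
  by apply: dvdn_fact; lia.
by case/dvdnP => q ->; rewrite mulnC exprM mu_ji expr1n.
Qed.

Lemma prod_XsubC_dvd_exp (rs : seq C) L : all (fun z => z ^+ L == 1) rs ->
  \prod_(z <- rs) ('X - z%:P) %| ('X^L - 1) ^+ size rs.
Proof.
elim: rs => [|z rs IHrs] /=; first by rewrite big_nil dvd1p.
case/andP => zL /IHrs; rewrite big_cons exprS; apply: dvdp_mul.
by rewrite dvdp_XsubCl /root !hornerE subr_eq0.
Qed.

Lemma char_poly_roots_unity n (Q : 'M[C]_n) L :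
  (forall z, root (char_poly Q) z -> z ^+ L = 1) -> (Q ^+ L - 1) ^+ n = 0.
Proof.
case: n Q => [Q _|n Q QL]; first by apply/matrixP => [[]].
have [rs] := closed_field_poly_normal (char_poly Q).
rewrite (monicP (char_poly_monic Q)) scale1r => charQ.
have n_rs : size rs = n.+1.
  by apply: succn_inj; rewrite -(size_char_poly Q) charQ size_prod_XsubC.
have /dvdpP [q] : char_poly Q %| ('X^L - 1) ^+ n.+1.
  rewrite charQ -n_rs; apply/prod_XsubC_dvd_exp/allP => z z_rs; apply/eqP/QL.
  by rewrite charQ root_prod_XsubC.
move/(congr1 (horner_mx Q)); rewrite rmorphM /= Cayley_Hamilton mulr0.
by rewrite rmorphXn rmorphB /= rmorphXn /= horner_mx_X rmorph1.
Qed.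

(* The eigenvalues of each P s are closed under mu |-> mu^m, hence are n!-th
   roots of unity; so P t = P (t / n!)^(n!) is unipotent by Cayley-Hamilton. *)
Lemma one_parameter_unipotent n (P : C -> 'M[C]_n) :
  (forall s t, P (s + t) = P s *m P t) -> P 0 = 1%:M ->
  (forall t m, (0 < m)%N ->
     exists2 D, D \in unitmx & D *m P t = P (m%:R * t) *m D) ->
  forall t, (P t - 1) ^+ n = 0.
Proof.
move=> PD P0 P_similar t.
have Pn m s : P (m%:R * s) = P s ^+ m.
  elim: m => [|m IHm]; first by rewrite mul0r P0 expr0.
  by rewrite mulrSr mulrDl mul1r PD IHm exprSr.
have P_unit s : P s \in unitmx.
  by case: (@mulmx1_unit _ _ (P s) (P (- s))); rewrite // -PD subrr P0.
have eigen_unity s mu : eigenvalue (P s) mu -> mu ^+ n`! = 1.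
  move=> Pmu; have := @root_powers_unity (char_poly (P s)) mu.
  rewrite size_char_poly; apply; first exact/monic_neq0/char_poly_monic.
    apply: contraTneq Pmu => ->; apply/eigenvalueP => -[v].
    by rewrite scale0r => vP0; rewrite -(mulmxK (P_unit s) v) vP0 mul0mx eqxx.
  move=> m m_gt0; rewrite -eigenvalue_root_char.
  have [D D_unit DP] := P_similar s m m_gt0.
  by apply: eigenvalue_similar D_unit DP _; rewrite Pn; apply: eigenvalue_exp.
have L_neq0 : n`!%:R != 0 :> C by rewrite pnatr_eq0 -lt0n fact_gt0.
rewrite -[t](divfK L_neq0) mulrC Pn; apply: char_poly_roots_unity => z.
by rewrite -eigenvalue_root_char; apply: eigen_unity.
Qed.
End Unipotent.

Section TwoByTwo.
Variable F : fieldType.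

Definition mx2 (a b c d : F) : 'M[F]_2 :=
  \matrix_(i, j) if i == 0 then (if j == 0 then a else b)
                 else (if j == 0 then c else d).

Definition uppermx t := mx2 1 t 0 1.
Definition lowermx t := mx2 1 0 t 1.
Definition diag2 c := mx2 c 0 0 c^-1.

Lemma mx2_eta (A : 'M[F]_2) : A = mx2 (A 0 0) (A 0 1) (A 1 0) (A 1 1).
Proof.
apply/matrixP => i j; rewrite mxE.
by case: i => -[|[|//]] ?; case: j => -[|[|//]] ?; congr (A _ _); apply: val_inj.
Qed.

Lemma mul_mx2 a b c d a' b' c' d' :
  mx2 a b c d *m mx2 a' b' c' d' =
  mx2 (a * a' + b * c') (a * b' + b * d') (c * a' + d * c') (c * b' + d * d').
Proof.
apply/matrixP => i j; rewrite !mxE !big_ord_recl big_ord0 !mxE addr0.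
by case: i => -[|[|//]] ?; case: j => -[|[|//]] ?.
Qed.

Lemma det_mx2 a b c d : \det (mx2 a b c d) = a * d - b * c.
Proof.
rewrite (expand_det_row _ 0) !big_ord_recl big_ord0 /cofactor !det_mx11 !mxE /=.
rewrite /bump /=; ring.
Qed.

Lemma det_uppermx t : \det (uppermx t) = 1.
Proof. by rewrite det_mx2; ring. Qed.

Lemma det_lowermx t : \det (lowermx t) = 1.
Proof. by rewrite det_mx2; ring. Qed.

Lemma det_diag2 c : c != 0 -> \det (diag2 c) = 1.
Proof. by move=> c_neq0; rewrite det_mx2 mulr0 subr0 divff. Qed.

Lemma mx2_1 : mx2 1 0 0 1 = 1%:M.
Proof.
by apply/matrixP => i j; rewrite !mxE; case: i => -[|[|//]] ?; case: j => -[|[|//]] ?.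
Qed.

Lemma uppermxD s t : uppermx (s + t) = uppermx s *m uppermx t.
Proof. by rewrite mul_mx2; congr mx2; ring. Qed.

Lemma lowermxD s t : lowermx (s + t) = lowermx s *m lowermx t.
Proof. by rewrite mul_mx2; congr mx2; ring. Qed.

Lemma uppermx0 : uppermx 0 = 1%:M. Proof. exact: mx2_1. Qed.
Lemma lowermx0 : lowermx 0 = 1%:M. Proof. exact: mx2_1. Qed.

Lemma diag2_uppermx c t : c != 0 ->
  diag2 c *m uppermx t = uppermx (c ^+ 2 * t) *m diag2 c.
Proof.
by move=> c_neq0; rewrite !mul_mx2; congr mx2; field; rewrite ?invr_eq0 ?c_neq0 ?oner_neq0.
Qed.

Lemma diag2_lowermx c t : c != 0 ->
  diag2 c^-1 *m lowermx t = lowermx (c ^+ 2 * t) *m diag2 c^-1.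
Proof.
by move=> c_neq0; rewrite !mul_mx2; congr mx2; field; rewrite ?invr_eq0 ?c_neq0 ?oner_neq0.
Qed.

Lemma det1_elementary_ind (G : 'M[F]_2 -> Prop) :
  (forall t, G (uppermx t)) -> (forall t, G (lowermx t)) ->
  (forall A B, \det A = 1 -> \det B = 1 -> G A -> G B -> G (A *m B)) ->
  forall A, \det A = 1 -> G A.
Proof.
move=> Gu Gl GM.
have Gc a b c d : a * d - b * c = 1 -> c != 0 -> G (mx2 a b c d).
  move=> det1 c_neq0.
  have -> : mx2 a b c d =
            uppermx ((a - 1) / c) *m lowermx c *m uppermx ((d - 1) / c).
    have -> : b = (a * d - 1) / c by rewrite -det1 opprB addrC subrK mulfK.
    by rewrite !mul_mx2; congr mx2; field.
  have det_ul : \det (uppermx ((a - 1) / c) *m lowermx c) = 1.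
    by rewrite det_mulmx det_uppermx det_lowermx mulr1.
  apply: (GM _ _ det_ul (det_uppermx _)) => //.
  exact: (GM _ _ (det_uppermx _) (det_lowermx _)).
move=> A; rewrite [A]mx2_eta det_mx2.
set a := A 0 0; set b := A 0 1; set c := A 1 0; set d := A 1 1 => det1.
have [c0|] := eqVneq c 0; last exact: Gc.
have a_neq0 : a != 0.
  by apply: contra_eq_neq det1 => ->; rewrite c0 !mul0r mulr0 subr0 eq_sym oner_eq0.
have -> : mx2 a b c d = lowermx 1 *m mx2 a b (c - a) (d - b).
  by rewrite mul_mx2; congr mx2; ring.
have det1_shift : a * (d - b) - b * (c - a) = 1 by rewrite -det1; ring.
apply: (GM _ _ (det_lowermx _)) => //; first by rewrite det_mx2.
by apply: Gc; rewrite // c0 sub0r oppr_eq0.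
Qed.
End TwoByTwo.

Lemma mxdirect_stable_fixed (F : fieldType) k n (W : 'I_k -> 'M[F]_n)
    (r : 'I_k -> 'rV_n) (M : 'M_n) :
  mxdirect (\sum_i W i) -> (forall i, W i *m M <= W i)%MS ->
  (forall i, r i <= W i)%MS ->
  (\sum_i r i) *m M = \sum_i r i -> forall i, r i *m M = r i.
Proof.
move=> /mxdirect_sumsP W_direct WM rW rM i.
set e := fun j => r j *m M - r j.
have eW j : (e j <= W j)%MS.
  by rewrite addmx_sub ?eqmx_opp // (submx_trans _ (WM j)) ?submxMr.
have : \sum_j e j = 0 by rewrite sumrB -mulmx_suml rM subrr.
rewrite (bigD1 i) //= => /eqP; rewrite addr_eq0 => /eqP ei.
apply/eqP; rewrite -subr_eq0 -/(e i) -submx0 -(W_direct i) //.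
rewrite sub_capmx eW ei eqmx_opp.
by apply: summx_sub => j ji; apply: (sumsmx_sup j).
Qed.

Section Representation.
Variables (R : realType) (n : nat) (S : 'M[R[i]]_2 -> 'M[R[i]]_n).
Local Notation fixed v := (forall A, SL2 A -> v *m (S A)^T = v).

Lemma irreducible_fixed_trivial (W : 'M_n) (v : 'rV_n) :
  irreducible_sub S W -> (v <= W)%MS -> v != 0 -> fixed v -> trivial_sub S W.
Proof.
case=> _ _ W_irr vW v_neq0 v_fixed.
have v_inv : Defs.invariant S <<v>>%MS.
  move=> A sA; rewrite genmxE -[X in (_ <= X)%MS](v_fixed A sA).
  by rewrite submxMr ?genmxE.
have v_sub : (<<v>> <= W)%MS by rewrite genmxE.
have [|vWeq] := W_irr _ v_inv v_sub.
  by rewrite -submx0 genmxE submx0 (negPf v_neq0).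
split; first by rewrite -(eqmx_rank vWeq) genmxE rank_rV v_neq0.
move=> A sA; apply/row_matrixP => j; rewrite row_mul.
have /sub_rVP [a ->] : (row j W <= v)%MS.
  by rewrite (submx_trans (row_sub j W)) // -(eqmxP vWeq) genmxE.
by rewrite -scalemxAl v_fixed.
Qed.

Lemma no_fixed_vector (r : 'rV_n) : multfree_notrivial S -> fixed r -> r = 0.
Proof.
case=> k [W [W_direct /andP [_ W_full] W_irr _ W_nontriv]] r_fixed.
have /sub_sumsmxP [u r_sum] : (r <= \sum_i W i)%MS.
  exact: submx_trans (submx1 r) W_full.
have comp_fixed i : fixed (u i *m W i).
  move=> A sA; apply: (mxdirect_stable_fixed (r := fun j => u j *m W j) W_direct).
  - by move=> j; case: (W_irr j) => W_inv _ _; apply: W_inv.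
  - by move=> j; apply: submxMl.
  - by rewrite -r_sum r_fixed.
rewrite r_sum big1 // => i _; apply/eqP; apply: contraT => comp_neq0.
case: (W_nontriv i).
exact: irreducible_fixed_trivial (W_irr i) (submxMl _ _) comp_neq0 (comp_fixed i).
Qed.

Lemma rep_fixes_psd_form (H : 'M_n) : is_rep S -> H^t* = H -> psdmx H ->
  (forall A, SL2 A -> S A *m H *m (S A)^t* = H) ->
  forall A, SL2 A -> S A *m H = H.
Proof.
case=> S_unit S1 SM H_herm H_psd H_inv.
have one_param (P : R[i] -> 'M_2) : (forall t, SL2 (P t)) ->
    (forall s t, P (s + t) = P s *m P t) -> P 0 = 1%:M ->
    (forall t m, (0 < m)%N ->
       exists2 g, SL2 g & g *m P t = P (m%:R * t) *m g) ->
    forall t, S (P t) *m H = H.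
  move=> P_SL2 PD P0 P_similar t.
  apply: (unipotent_fixed_form H_herm H_psd (H_inv _ (P_SL2 t))).
  apply: (one_parameter_unipotent (P := fun t => S (P t))) => [s r||r m m_gt0].
  - by rewrite PD SM.
  - by rewrite P0 S1.
  have [g g_SL2 gP] := P_similar r m m_gt0.
  by exists (S g); rewrite ?S_unit // -!SM // gP.
have sqrt_neq0 m : (0 < m)%N -> sqrtC (m%:R : R[i]) != 0.
  by rewrite sqrtC_eq0 pnatr_eq0 -lt0n.
apply: det1_elementary_ind => [t|t|A B sA sB AH BH]; last by rewrite SM // -mulmxA BH AH.
  apply: one_param => [t'|||t' m m_gt0]; [exact: det_uppermx|exact: uppermxD|exact: uppermx0|].
  exists (diag2 (sqrtC m%:R)); first exact/det_diag2/sqrt_neq0.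
  by rewrite diag2_uppermx ?sqrtCK ?sqrt_neq0.
apply: one_param => [t'|||t' m m_gt0]; [exact: det_lowermx|exact: lowermxD|exact: lowermx0|].
exists (diag2 (sqrtC m%:R)^-1); first by apply: det_diag2; rewrite invr_eq0 sqrt_neq0.
by rewrite diag2_lowermx ?sqrtCK ?sqrt_neq0.
Qed.

Lemma invariant_psd_form_eq0 (H : 'M_n) : is_rep S -> multfree_notrivial S ->
  H^t* = H -> psdmx H -> (forall A, SL2 A -> S A *m H *m (S A)^t* = H) -> H = 0.
Proof.
move=> S_rep S_mf H_herm H_psd H_inv.
have H_fixed := rep_fixes_psd_form S_rep H_herm H_psd H_inv.
apply: trmx_inj; rewrite trmx0; apply/row_matrixP => j; rewrite row0.
by apply: no_fixed_vector S_mf _ => A sA; rewrite -row_mul -trmx_mul H_fixed.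
Qed.
End Representation.

Section InnerProduct.
Variables (R : realType) (V : lmodType R[i]) (ip : V -> V -> R[i]).
Hypothesis ip_hilbert : hilbert_ip ip.

Lemma ipC u v : ip v u = (ip u v)^*.
Proof. by case: ip_hilbert. Qed.

Lemma ip0r u : ip u 0 = 0.
Proof.
case: ip_hilbert => ip_lin _ _ _ _; have := ip_lin u 0 0 1.
by rewrite scale1r addr0 mul1r -{1}[ip u 0]addr0 => /addrI.
Qed.

Lemma ipDr u v w : ip u (v + w) = ip u v + ip u w.
Proof.
by case: ip_hilbert => ip_lin _ _ _ _; have := ip_lin u v w 1; rewrite scale1r mul1r.
Qed.

Lemma ipZr u c v : ip u (c *: v) = c * ip u v.
Proof.
by case: ip_hilbert => ip_lin _ _ _ _; have := ip_lin u v 0 c; rewrite !addr0 ip0r addr0.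
Qed.

Lemma ipDl u v w : ip (u + v) w = ip u w + ip v w.
Proof. by rewrite ipC ipDr rmorphD /= -!ipC. Qed.

Lemma ipZl c u v : ip (c *: u) v = c^* * ip u v.
Proof. by rewrite ipC ipZr rmorphM /= -!ipC. Qed.

Lemma ip0l u : ip 0 u = 0.
Proof. by rewrite ipC ip0r rmorph0. Qed.

Lemma ipBl u v w : ip (u - v) w = ip u w - ip v w.
Proof. by rewrite ipDl -scaleN1r ipZl rmorphN1 mulN1r. Qed.

Lemma ipBr u v w : ip u (v - w) = ip u v - ip u w.
Proof. by rewrite ipDr -scaleN1r ipZr mulN1r. Qed.

Lemma ip_sumr (I : Type) (r : seq I) (P : pred I) (F : I -> V) u :
  ip u (\sum_(i <- r | P i) F i) = \sum_(i <- r | P i) ip u (F i).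
Proof. by elim/big_rec2: _ => [|i y1 y2 _ <-]; rewrite ?ip0r ?ipDr. Qed.

Lemma ip_suml (I : Type) (r : seq I) (P : pred I) (F : I -> V) u :
  ip (\sum_(i <- r | P i) F i) u = \sum_(i <- r | P i) ip (F i) u.
Proof. by elim/big_rec2: _ => [|i y1 y2 _ <-]; rewrite ?ip0l ?ipDl. Qed.

Lemma ip_ge0 u : 0 <= ip u u.
Proof. by case: ip_hilbert. Qed.

Lemma ip_eq0 u : ip u u = 0 -> u = 0.
Proof. by case: ip_hilbert => _ _ _ ip_def _; apply: ip_def. Qed.

Lemma ip_dense_eq0 (D : V -> Prop) z : is_dense ip D ->
  (forall v, D v -> ip z v = 0) -> z = 0.
Proof.
move=> D_dense z_perp; apply/ip_eq0/eqP.
have := ip_ge0 z; rewrite le0r => /orP [//|zz_gt0]; exfalso.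
have Re_gt0 : 0 < complex.Re (ip z z) by move: zz_gt0; rewrite ltcE => /andP [].
have [d [Dd]] := D_dense z _ Re_gt0.
rewrite /dist2 ipBl !ipBr [ip d z]ipC (z_perp d Dd) rmorph0 !subr0 sub0r opprK.
rewrite raddfD /= gtrDl; apply/negP; rewrite -leNgt.
by have := ip_ge0 d; rewrite lecE => /andP [].
Qed.

Definition gram n (f : 'I_n -> V) : 'M[R[i]]_n := \matrix_(a, b) ip (f b) (f a).

Lemma gram_mix m n (M : 'M_(m, n)) (f : 'I_n -> V) (g : 'I_m -> V) :
  (forall a, g a = \sum_b M a b *: f b) -> gram g = M *m gram f *m M^t*.
Proof.
move=> gE; apply/matrixP => a b; rewrite !mxE !gE ip_suml; apply: eq_bigr => d _.
rewrite ipZl ip_sumr !mxE mulrC !mulr_suml.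
by apply: eq_bigr => e _; rewrite ipZr !mxE.
Qed.

Lemma gram_mix_conj m n (M : 'M_(m, n)) (f : 'I_n -> V) (g : 'I_m -> V) :
  (forall a, g a = \sum_b (M a b)^* *: f b) ->
  map_mx conjC (gram g) = M *m map_mx conjC (gram f) *m M^t*.
Proof.
move=> gE; rewrite (@gram_mix _ _ (map_mx conjC M) f g).
  by rewrite !map_mxM map_mxCK map_trmx !map_mxCK.
by move=> a; rewrite gE; apply: eq_bigr => b _; rewrite mxE.
Qed.

Lemma gram_herm n (f : 'I_n -> V) : (gram f)^t* = gram f.
Proof. by apply/matrixP => a b; rewrite !mxE -ipC. Qed.

Lemma gram_psd n (f : 'I_n -> V) : psdmx (gram f).
Proof.
move=> c; rewrite /form -(@gram_mix _ _ c f (fun a => \sum_b c a b *: f b)) //.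
by rewrite mxE; apply: ip_ge0.
Qed.

Lemma gram_eq0 n (f : 'I_n -> V) : gram f = 0 -> forall a, f a = 0.
Proof.
by move=> f0 a; apply: ip_eq0; have := congr1 (fun G : 'M_n => G a a) f0; rewrite !mxE.
Qed.
End InnerProduct.

Lemma Lam0 (R : realType) (A : 'M[R[i]]_2) : Lam A 0 = 0.
Proof.
have herm0 : herm_of (0 : mink R) = 0.
  apply/matrixP => i j; rewrite !mxE /=.
  by do !case: ifP => _; rewrite ?addr0 ?subr0 ?oppr0.
rewrite /Lam herm0 mulmx0 mul0mx; apply/rowP => k; rewrite !mxE /=.
by do !case: ifP => _; rewrite ?addr0 ?subr0 ?mul0r.
Qed.

Lemma SL2_invmx (R : realType) (A : 'M[R[i]]_2) : SL2 A -> SL2 (invmx A).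
Proof. by rewrite /SL2 det_inv => ->; rewrite invr1. Qed.

Lemma SL2_1 (R : realType) : SL2 (1%:M : 'M[R[i]]_2).
Proof. by rewrite /SL2 det1. Qed.

Section Vacuum.
Variables (R : realType) (V : lmodType R[i]) (ip : V -> V -> R[i]).
Variables (D : V -> Prop) (U : mink R -> 'M[R[i]]_2 -> V -> V).
Variables (n : nat) (S : 'M[R[i]]_2 -> 'M[R[i]]_n).
Variables (psi : 'I_n -> mink R -> V -> V) (Omega : V).
Hypotheses (ip_hilbert : hilbert_ip ip) (D_dense : is_dense ip D).
Hypothesis U_unitary : forall a A, SL2 A -> unitary_op ip (U a A).
Hypotheses (S_rep : is_rep S) (S_mf : multfree_notrivial S).
Hypothesis U_adj : forall a A, SL2 A -> adjoint_preserves ip (fun=> True) (U a A) D.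
Hypothesis psi_adj : forall alpha, adjoint_preserves ip D (psi alpha 0) D.
Hypothesis psi_cov : forall a A, SL2 A -> forall x alpha v, D v ->
  forall u, adjoint_at ip (fun=> True) (U a A) v u ->
  U a A (psi alpha x u) =
    \sum_(beta < n) (S (invmx A)) alpha beta *: psi beta (Lam A x + a) v.
Hypothesis D_Omega : D Omega.
Hypothesis U_Omega : forall a A, SL2 A -> U a A Omega = Omega.

Lemma U_ip a A u v : SL2 A -> ip (U a A u) (U a A v) = ip u v.
Proof. by move=> sA; case: (U_unitary a sA). Qed.

Lemma U0 a A : SL2 A -> U a A 0 = 0.
Proof.
move=> sA; case: (U_unitary a sA) => U_lin _ _; have := U_lin 1 0 0.
by rewrite !scale1r !addr0 -{1}[U a A 0]addr0 => /addrI /esym.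
Qed.

Lemma U_adjoint_inv a A w u : SL2 A ->
  adjoint_at ip (fun=> True) (U a A) w u -> U a A u = w.
Proof.
move=> sA u_adj; case: (U_unitary a sA) => _ _ /(_ w) [u' Uu'].
rewrite -Uu'; congr (U a A _); apply/eqP; rewrite -subr_eq0.
apply/eqP/(ip_eq0 ip_hilbert).
by rewrite ipBl // (u_adj _ I) -Uu' U_ip // subrr.
Qed.

Lemma ip_Omega_U a A v : SL2 A -> ip Omega (U a A v) = ip Omega v.
Proof. by move=> sA; rewrite -{1}(U_Omega a sA) U_ip. Qed.

Lemma U_adjoint_Omega a A :
  SL2 A -> adjoint_at ip (fun=> True) (U a A) Omega Omega.
Proof. by move=> sA v _; rewrite ip_Omega_U. Qed.

Lemma psi_translate al x v u : D v ->
  adjoint_at ip (fun=> True) (U x 1%:M) v u -> U x 1%:M (psi al 0 u) = psi al x v.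
Proof.
move=> Dv u_adj; rewrite (psi_cov (SL2_1 R) _ _ Dv u_adj) Lam0 add0r invmx1.
case: S_rep => _ -> _; rewrite (bigD1 al) //= big1 => [|be be_neq]; rewrite !mxE.
  by rewrite eqxx scale1r addr0.
by rewrite eq_sym (negPf be_neq) scale0r.
Qed.

Lemma psi_lorentz A al v u : SL2 A -> D v ->
  adjoint_at ip (fun=> True) (U 0 A) v u ->
  U 0 A (psi al 0 u) = \sum_be S (invmx A) al be *: psi be 0 v.
Proof. by move=> sA Dv u_adj; rewrite (psi_cov sA _ _ Dv u_adj) Lam0 addr0. Qed.

Lemma gram_U a A (f : 'I_n -> V) :
  SL2 A -> gram ip (fun al => U a A (f al)) = gram ip f.
Proof. by move=> sA; apply/matrixP => al be; rewrite !mxE U_ip. Qed.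

Lemma covariant_family_eq0 (f : 'I_n -> V) :
  (forall A al, SL2 A -> U 0 A (f al) = \sum_be S (invmx A) al be *: f be) ->
  forall al, f al = 0.
Proof.
move=> f_cov; apply/(gram_eq0 ip_hilbert)/(invariant_psd_form_eq0 S_rep S_mf).
- exact: gram_herm.
- exact: gram_psd.
move=> A sA; have sA' := SL2_invmx sA.
by rewrite -[A]invmxK -(gram_mix ip_hilbert (fun al => f_cov _ al sA')) gram_U.
Qed.

Lemma covariant_family_conj_eq0 (f : 'I_n -> V) :
  (forall A al, SL2 A -> U 0 A (f al) = \sum_be (S (invmx A) al be)^* *: f be) ->
  forall al, f al = 0.
Proof.
move=> f_cov; apply: (gram_eq0 ip_hilbert); rewrite -[gram ip f](@map_mxCK _ n n).
rewrite (@invariant_psd_form_eq0 _ _ S (map_mx conjC (gram ip f))) ?map_mx0 //.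
- exact/map_conj_herm/gram_herm.
- exact/psdmx_conj/gram_psd.
move=> A sA; have sA' := SL2_invmx sA.
by rewrite -[A]invmxK -(gram_mix_conj ip_hilbert (fun al => f_cov _ al sA')) gram_U.
Qed.

Lemma adjoint_family_covariant (w : 'I_n -> V) :
  (forall al, adjoint_at ip D (psi al 0) Omega (w al)) ->
  forall A al, SL2 A -> U 0 A (w al) = \sum_be (S (invmx A) al be)^* *: w be.
Proof.
move=> w_adj A al sA; apply/eqP; rewrite -subr_eq0; apply/eqP.
apply: (ip_dense_eq0 ip_hilbert D_dense) => v Dv.
rewrite ipBl //; apply/eqP; rewrite subr_eq0; apply/eqP.
have [u [Du u_adj]] := U_adj 0 sA Dv.
rewrite -{1}(U_adjoint_inv sA u_adj) U_ip // (w_adj al u Du) -(ip_Omega_U 0 _ sA).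
rewrite (psi_lorentz _ sA Dv u_adj) (ip_sumr ip_hilbert) (ip_suml ip_hilbert).
by apply: eq_bigr => be _; rewrite ipZr // ipZl // conjCK (w_adj be v Dv).
Qed.

Lemma vacuum_orthogonal_field al x v : D v -> ip Omega (psi al x v) = 0.
Proof.
move=> Dv; have /fin_all_exists [w w_adj] be :
    exists u, D u /\ adjoint_at ip D (psi be 0) Omega u.
  exact: psi_adj.
have w0 := covariant_family_conj_eq0
  (adjoint_family_covariant (fun be => (w_adj be).2)).
have [u [Du u_adj]] := U_adj x (SL2_1 R) Dv.
rewrite -(psi_translate al Dv u_adj) ip_Omega_U; last exact: SL2_1.
by have := (w_adj al).2 u Du; rewrite w0 ip0l.
Qed.

Lemma field_vacuum_eq0 al x : psi al x Omega = 0.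
Proof.
rewrite -(psi_translate al D_Omega (U_adjoint_Omega x (SL2_1 R))).
have psi0_cov A be : SL2 A ->
    U 0 A (psi be 0 Omega) = \sum_ga S (invmx A) be ga *: psi ga 0 Omega.
  by move=> sA; apply: psi_lorentz sA D_Omega (U_adjoint_Omega 0 sA).
by rewrite (covariant_family_eq0 psi0_cov) U0 //; apply: SL2_1.
Qed.

Lemma field_adjoint_vacuum_eq0 al x u :
  adjoint_at ip D (psi al x) Omega u -> u = 0.
Proof.
move=> u_adj; apply: (ip_dense_eq0 ip_hilbert D_dense) => v Dv.
by rewrite u_adj // vacuum_orthogonal_field.
Qed.
End Vacuum.

Unset Implicit Arguments.
Local Open Scope complex_scope.

Theorem theorem3 (R : realType) (V : lmodType R[i]) (ip : V -> V -> R[i])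
  (D : V -> Prop)
  (U : mink R -> 'M[R[i]]_2 -> V -> V)
  (n : nat) (S : 'M[R[i]]_2 -> 'M[R[i]]_n)
  (psi : 'I_n -> mink R -> V -> V)
  (Omega : V) :
  hilbert_ip ip ->
  is_subspace D -> is_dense ip D ->
  (* U is a unitary representation of R^4 x| SL(2,C) *)
  (forall a A, SL2 A -> unitary_op ip (U a A)) ->
  (forall v, U 0 1%:M v = v) ->
  (forall a A b B, SL2 A -> SL2 B -> forall v,
      U a A (U b B v) = U (a + Lam A b) (A *m B) v) ->
  (* S : SL(2,C) -> GL(C^n) multiplicity-free, no trivial sub-representations *)
  is_rep S -> multfree_notrivial S ->
  (* psi_alpha(x) in L(D, H) *)
  (forall alpha x, linear_on D (psi alpha x)) ->
  (* (1) *)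
  (forall a A, SL2 A ->
      (forall v, D v -> D (U a A v)) /\
      adjoint_preserves ip (fun=> True) (U a A) D) ->
  (* (2) *)
  (forall alpha x,
      (forall v, D v -> D (psi alpha x v)) /\
      adjoint_preserves ip D (psi alpha x) D) ->
  (* (3) covariance on D *)
  (forall a A, SL2 A -> forall x alpha v, D v ->
      forall u, adjoint_at ip (fun=> True) (U a A) v u ->
      U a A (psi alpha x u) =
        \sum_(beta < n) (S (invmx A)) alpha beta *: psi beta (Lam A x + a) v) ->
  (* (4) invariant nonzero vacuum *)
  D Omega -> Omega != 0 -> (forall a A, SL2 A -> U a A Omega = Omega) ->
  forall alpha x,
    psi alpha x Omega = 0 /\
    (forall u, adjoint_at ip D (psi alpha x) Omega u -> u = 0).
Proof.
move=> ip_hilbert _ D_dense U_unitary _ _ S_rep S_mf _ U_D psi_D psi_cov.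
move=> D_Omega _ U_Omega alpha x.
have U_adj a A sA := (U_D a A sA).2.
have psi_adj be := (psi_D be 0).2.
split.
  exact: field_vacuum_eq0 ip_hilbert U_unitary S_rep S_mf psi_cov D_Omega U_Omega alpha x.
exact: field_adjoint_vacuum_eq0 ip_hilbert D_dense U_unitary S_rep S_mf
  U_adj psi_adj psi_cov D_Omega U_Omega alpha x.
Qed.
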